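(* Let $p\in\mathbb{N}$ and let $B_w$ be the weighted backward shift on $\ell^2$ with weights $w_k=\left(\frac{k+2}{k+1}\right)^{1/(2p)}$, $k\in\mathbb{N}$. Then $B_w$ is not $p$-frequently hypercyclic on $\ell^2$ (norm topology), but $B_w$ is $q$-frequently hypercyclic on $\ell^2$ for every $q\ge p+1$.
   Context: The weighted backward shift is $B_w(e_n)=w_ne_{n-1}$ for $n\ge1$, $e_0=0$. An operator $T$ on a separable topological vector space $X$ is $q$-frequently hypercyclic ($q\in\mathbb{N}$) if there is $x\in X$ such that for every nonempty open $U$ the set $\{n\in\mathbb{N}:T^nx\in U\}$ has positive $q$-lower density, where $q\text{-}\underline{\mathrm{dens}}(A)=\liminf_{N\to\infty}\frac{\mathrm{card}\{n\in A:n\le N^q\}}{N}$. *)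

From Stdlib Require Import Reals Lra Lia Classical ClassicalEpsilon.
Open Scope R_scope.

Definition seqR := nat -> R.

Definition in_l2 (x : seqR) : Prop :=
  exists l, infinite_sum (fun k => (x k)^2) l.

Definition l2dist_lt (x y : seqR) (r : R) : Prop :=
  exists l, infinite_sum (fun k => (x k - y k)^2) l /\ sqrt l < r.

(** Open subsets of l^2 (norm topology), as predicates on seqR
    (only their trace on l^2 matters). *)
Definition l2_open (U : seqR -> Prop) : Prop :=
  forall x, in_l2 x -> U x ->
    exists eps, 0 < eps /\ forall y, in_l2 y -> l2dist_lt x y eps -> U y.

Definition l2_nonempty (U : seqR -> Prop) : Prop :=
  exists x, in_l2 x /\ U x.

(** Weighted backward shift: B_w(e_n) = w_n e_{n-1}, B_w(e_0)=0,
    i.e. (B_w x)_k = w_{k+1} x_{k+1}. *)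
Definition Bshift (w : nat -> R) (x : seqR) : seqR :=
  fun k => w (S k) * x (S k).

Definition iterT (T : seqR -> seqR) (n : nat) (x : seqR) : seqR :=
  Nat.iter n T x.

Fixpoint count_upto (A : nat -> Prop) (M : nat) : nat :=
  match M with
  | O => if excluded_middle_informative (A O) then 1%nat else 0%nat
  | S m => (count_upto A m +
            if excluded_middle_informative (A (S m)) then 1%nat else 0%nat)%nat
  end.

(** q-lower density of A is positive:
    liminf_{N->oo} card{n in A : n <= N^q} / N > 0. *)
Definition q_lower_dens_pos (q : nat) (A : nat -> Prop) : Prop :=
  exists c, 0 < c /\ exists N0 : nat, forall N : nat, (N0 <= N)%nat -> (0 < N)%nat ->
    c <= INR (count_upto A (N ^ q)) / INR N.

Definition q_freq_hypercyclic_l2 (q : nat) (T : seqR -> seqR) : Prop :=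
  exists x, in_l2 x /\
    forall U, l2_open U -> l2_nonempty U ->
      q_lower_dens_pos q (fun n => U (iterT T n x)).

Definition weight (p : nat) (k : nat) : R :=
  Rpower ((INR k + 2) / (INR k + 1)) (1 / (2 * INR p)).

From Stdlib Require Import Reals Lra Lia Classical ClassicalEpsilon ZArith.
Open Scope R_scope.

(* Along an orbit, (B_w^n x)_k = ((k+n+2)/(k+2))^(1/(2p)) x_(k+n).

   Not p-frequently hypercyclic: a visit at time n of {y : |y_0 - 1| < 1/2} forces
   x_n^2 >= ((n+2)/2)^(-1/p) / 4.  Positive p-lower density yields at least c 2^i visiting times
   n <= 2^(ip), each carrying mass about 2^(-i), so the mass of x on the visiting times up to
   2^(ip) grows linearly in i and x is not in l^2.

   q-frequently hypercyclic for q >= p+1: block i of the index set starts at 4^(p(p+1)i) and holds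
   4^(pi) slots of length 4^(p^2 i).  Slot t carries a finitely supported target, a grid point
   encoded by the 2-adic valuation and the odd part of t+1, divided by the orbit factor, so that
   B_w^n at the start n of the slot returns exactly the target in the first coordinates.  The
   orbit factors grow fast enough for x to lie in l^2 and for the other slots to perturb the
   target by O(2^(-i/2)).  Each grid point recurs with a fixed period among the slots, and since
   the start of block i+1 is at most N^(p+1) for N ~ 4^(pi), one gets about N visits below N^q. *)

Fixpoint psum (f : nat -> R) (n : nat) : R :=
  match n with O => 0 | S n => psum f n + f n end.

Lemma psum_ext f g n : (forall k, (k < n)%nat -> f k = g k) -> psum f n = psum g n.
Proof.
  induction n; simpl; intros H; auto.
  rewrite IHn by (intros; apply H; lia). rewrite H by lia; auto.
Qed.

Lemma psum_le f g n : (forall k, (k < n)%nat -> f k <= g k) -> psum f n <= psum g n.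
Proof.
  induction n; simpl; intros H; [lra|].
  assert (psum f n <= psum g n) by (apply IHn; intros; apply H; lia).
  assert (f n <= g n) by (apply H; lia). lra.
Qed.

Lemma psum_ge0 f n : (forall k, 0 <= f k) -> 0 <= psum f n.
Proof. intros H; induction n; simpl; [lra|]. specialize (H n); lra. Qed.

Lemma psum_const c n : psum (fun _ => c) n = INR n * c.
Proof. induction n; simpl psum; [simpl; lra|]. rewrite IHn, S_INR; lra. Qed.

Lemma psum_add f g n : psum (fun k => f k + g k) n = psum f n + psum g n.
Proof. induction n; simpl; [lra|]. rewrite IHn; lra. Qed.

Lemma psum_scal c f n : psum (fun k => c * f k) n = c * psum f n.
Proof. induction n; simpl; [lra|]. rewrite IHn; lra. Qed.

Lemma psum_split f a b : psum f (a + b) = psum f a + psum (fun j => f (a + j)%nat) b.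
Proof.
  induction b; simpl. { rewrite Nat.add_0_r; lra. }
  rewrite Nat.add_succ_r; simpl; rewrite IHb; lra.
Qed.

Lemma psum_mono f a b : (forall k, 0 <= f k) -> (a <= b)%nat -> psum f a <= psum f b.
Proof.
  intros Hf Hab. replace b with (a + (b - a))%nat by lia. rewrite psum_split.
  assert (0 <= psum (fun j => f (a + j)%nat) (b - a)) by (apply psum_ge0; auto). lra.
Qed.

Lemma psum_blocks f n S : psum f (n * S) = psum (fun t => psum (fun k => f (t * S + k)%nat) S) n.
Proof. induction n; simpl; auto. rewrite Nat.add_comm, psum_split, IHn. auto. Qed.

Lemma psum_indicator m b N : 0 <= b -> psum (fun k => if (k <? m)%nat then b else 0) N <= INR m * b.
Proof.
  intros Hb.
  assert (E : forall N, psum (fun k => if (k <? m)%nat then b else 0) N = INR (Nat.min N m) * b).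
  { clear N. intro n; induction n; simpl psum. { simpl; lra. }
    rewrite IHn. destruct (Nat.ltb_spec n m).
    - replace (Nat.min (S n) m) with (S (Nat.min n m)) by lia. rewrite S_INR. lra.
    - replace (Nat.min (S n) m) with (Nat.min n m) by lia. lra. }
  rewrite E. apply Rmult_le_compat_r; auto. apply le_INR; lia.
Qed.

Lemma psum_le_supp f m b N : 0 <= b -> (forall k, (m <= k)%nat -> f k <= 0) ->
  (forall k, (k < m)%nat -> f k <= b) -> psum f N <= INR m * b.
Proof.
  intros Hb H1 H2. eapply Rle_trans; [|apply (psum_indicator m b N Hb)].
  apply psum_le. intros k _. destruct (Nat.ltb_spec k m); auto.
Qed.

Lemma psum_geom N : psum (fun i => / 2 ^ i) N <= 2.
Proof.
  assert (E : psum (fun i => / 2 ^ i) N = 2 - 2 * / 2 ^ N).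
  { induction N; simpl psum. { simpl; lra. }
    rewrite IHN. simpl pow. assert (0 < 2 ^ N) by (apply pow_lt; lra).
    rewrite Rinv_mult. field. lra. }
  rewrite E. assert (0 < / 2 ^ N) by (apply Rinv_0_lt_compat, pow_lt; lra). lra.
Qed.

Lemma sum_f_R0_psum f N : sum_f_R0 f N = psum f (S N).
Proof. induction N; simpl; [lra|]. rewrite IHN; simpl; auto. Qed.

Lemma Un_growing_sum_f_R0 f : (forall k, 0 <= f k) -> Un_growing (sum_f_R0 f).
Proof. intros Hf n. rewrite !sum_f_R0_psum. simpl. specialize (Hf (S n)). simpl in Hf. lra. Qed.

Lemma infinite_sum_of_bounded_psum f B : (forall k, 0 <= f k) -> (forall n, psum f n <= B) ->
  exists l, infinite_sum f l /\ l <= B.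
Proof.
  intros Hf HB.
  assert (Hub : has_ub (sum_f_R0 f)).
  { exists B. intros x [i ->]. rewrite sum_f_R0_psum. apply HB. }
  destruct (growing_cv _ (Un_growing_sum_f_R0 f Hf) Hub) as [l Hl].
  exists l. split; [exact Hl|].
  apply Rle_cv_lim with (Un := sum_f_R0 f) (Vn := fun _ => B); auto.
  - intros; rewrite sum_f_R0_psum; auto.
  - intros e He; exists O; intros; unfold Rdist; rewrite Rminus_diag, Rabs_R0; auto.
Qed.

Lemma psum_le_infinite_sum f l n : (forall k, 0 <= f k) -> infinite_sum f l -> psum f n <= l.
Proof.
  intros Hf Hl. pose proof (Un_growing_sum_f_R0 f Hf) as Hg.
  assert (H1 : psum f (S n) <= l) by (rewrite <- sum_f_R0_psum; apply growing_ineq; auto).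
  assert (psum f n <= psum f (S n)) by (apply psum_mono; auto). lra.
Qed.

Lemma Rabs_le_sqrt a l : a ^ 2 <= l -> Rabs a <= sqrt l.
Proof.
  intros H. assert (0 <= l) by (pose proof (pow2_ge_0 a); lra).
  pose proof (sqrt_pos l). pose proof (sqrt_sqrt l H0).
  pose proof (Rabs_pos a). pose proof (pow2_abs a).
  destruct (Rle_lt_dec (Rabs a) (sqrt l)); auto. nra.
Qed.

Lemma sqrt_lt_of_lt_sq l e : 0 < e -> l < e ^ 2 -> sqrt l < e.
Proof.
  intros He Hl. destruct (Rle_lt_dec 0 l).
  - pose proof (sqrt_sqrt l r). pose proof (sqrt_pos l).
    destruct (Rlt_le_dec (sqrt l) e); auto. nra.
  - rewrite sqrt_neg_0 by lra. auto.
Qed.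

Lemma sq_sub_le a b c : (a - c) ^ 2 <= 2 * (a - b) ^ 2 + 2 * (b - c) ^ 2.
Proof. pose proof (pow2_ge_0 ((a - b) - (b - c))). nra. Qed.

Lemma INR_pow4 e : INR (4 ^ e) = 4 ^ e.
Proof. rewrite pow_INR. f_equal. simpl. lra. Qed.

Lemma INR_pow2 e : INR (2 ^ e) = 2 ^ e.
Proof. rewrite pow_INR. f_equal. Qed.

Lemma Rpower_pos x y : 0 < Rpower x y.
Proof. unfold Rpower; apply exp_pos. Qed.

Lemma Rpower_inv_ge p R X : (1 <= p)%nat -> 0 < R -> R ^ p <= X -> R <= Rpower X (/ INR p).
Proof.
  intros Hp HR HX. assert (0 < INR p) by (apply lt_0_INR; lia).
  assert (E : R = Rpower (R ^ p) (/ INR p)).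
  { rewrite <- Rpower_pow by auto. rewrite Rpower_mult, Rinv_r by lra. rewrite Rpower_1; auto. }
  rewrite E at 1. apply Rle_Rpower_l; [left; apply Rinv_0_lt_compat; auto|].
  split; auto. apply pow_lt; auto.
Qed.

Lemma Rpower_inv_le p R X : (1 <= p)%nat -> 0 < R -> 0 < X -> X <= R ^ p -> Rpower X (/ INR p) <= R.
Proof.
  intros Hp HR HX0 HX. assert (0 < INR p) by (apply lt_0_INR; lia).
  assert (E : R = Rpower (R ^ p) (/ INR p)).
  { rewrite <- Rpower_pow by auto. rewrite Rpower_mult, Rinv_r by lra. rewrite Rpower_1; auto. }
  rewrite E at 1. apply Rle_Rpower_l; [left; apply Rinv_0_lt_compat; auto|]. split; auto.
Qed.

(* [wprod p k n = w_(k+1) * ... * w_(k+n)] for the weights [weight p]; the product telescopes. *)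
Definition wprod (p k n : nat) : R :=
  Rpower ((INR k + INR n + 2) / (INR k + 2)) (1 / (2 * INR p)).

Lemma wprod_base_pos k n : 0 < (INR k + INR n + 2) / (INR k + 2).
Proof. pose proof (pos_INR k); pose proof (pos_INR n). apply Rdiv_lt_0_compat; lra. Qed.

Lemma wprod_pos p k n : 0 < wprod p k n.
Proof. apply Rpower_pos. Qed.

Lemma iterT_Bshift_weight p x n k :
  iterT (Bshift (weight p)) n x k = wprod p k n * x (k + n)%nat.
Proof.
  revert k; induction n; intro k.
  - unfold iterT, wprod; simpl. rewrite Nat.add_0_r.
    replace ((INR k + 0 + 2) / (INR k + 2)) with 1 by (pose proof (pos_INR k); field; lra).
    unfold Rpower; rewrite ln_1, Rmult_0_r, exp_0; lra.
  - unfold iterT in *; simpl Nat.iter. unfold Bshift at 1. rewrite IHn.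
    replace (S k + n)%nat with (k + S n)%nat by lia. rewrite <- Rmult_assoc. f_equal.
    unfold weight, wprod. rewrite Rpower_mult_distr.
    2:{ rewrite S_INR. pose proof (pos_INR k); apply Rdiv_lt_0_compat; lra. }
    2: apply wprod_base_pos.
    f_equal. rewrite !S_INR. pose proof (pos_INR k); pose proof (pos_INR n). field; lra.
Qed.

Lemma wprod_add p k d n : wprod p k (d + n) = wprod p k d * wprod p (k + d) n.
Proof.
  unfold wprod. rewrite Rpower_mult_distr by apply wprod_base_pos. f_equal.
  rewrite !plus_INR. pose proof (pos_INR k); pose proof (pos_INR n); pose proof (pos_INR d).
  field; lra.
Qed.

Lemma wprod_sq p k n : (1 <= p)%nat ->
  wprod p k n ^ 2 = Rpower ((INR k + INR n + 2) / (INR k + 2)) (/ INR p).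
Proof.
  intros Hp. unfold wprod. simpl. rewrite Rmult_1_r, <- Rpower_plus. f_equal.
  assert (0 < INR p) by (apply lt_0_INR; lia). field; lra.
Qed.

Lemma l2dist_lt_coord x y r k : l2dist_lt x y r -> Rabs (x k - y k) < r.
Proof.
  intros [l [Hl Hs]]. eapply Rle_lt_trans; [|apply Hs]. apply Rabs_le_sqrt.
  eapply Rle_trans;
    [|apply (psum_le_infinite_sum (fun k => (x k - y k) ^ 2) _ (S k)); auto; intros; apply pow2_ge_0].
  replace (S k) with (k + 1)%nat by lia. rewrite psum_split. cbn [psum].
  rewrite Nat.add_0_r.
  pose proof (psum_ge0 (fun k0 => (x k0 - y k0) ^ 2) k (fun _ => pow2_ge_0 _)). lra.
Qed.

Definition e0 : seqR := fun k => if Nat.eqb k 0 then 1 else 0.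

Lemma e0_in_l2 : in_l2 e0.
Proof.
  destruct (infinite_sum_of_bounded_psum (fun k => e0 k ^ 2) 1) as [l [H _]].
  - intros; apply pow2_ge_0.
  - intros [|n]; [simpl; lra|]. replace (S n) with (1 + n)%nat by lia. rewrite psum_split.
    rewrite (psum_ext (fun j => e0 (1 + j)%nat ^ 2) (fun _ => 0)) by (intros; unfold e0; simpl; lra).
    rewrite psum_const. unfold e0; simpl. lra.
  - exists l; auto.
Qed.

Definition near_e0 : seqR -> Prop := fun y => Rabs (y O - 1) < 1 / 2.

Lemma near_e0_open : l2_open near_e0.
Proof.
  intros y _ Hy. exists (1 / 2 - Rabs (y O - 1)). split; [unfold near_e0 in Hy; lra|].
  intros z _ Hd. apply (l2dist_lt_coord _ _ _ O) in Hd. unfold near_e0 in *.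
  pose proof (Rabs_triang (z O - y O) (y O - 1)).
  replace (z O - y O + (y O - 1)) with (z O - 1) in H by ring.
  rewrite Rabs_minus_sym in Hd. lra.
Qed.

Lemma near_e0_nonempty : l2_nonempty near_e0.
Proof.
  exists e0; split; [apply e0_in_l2|]. unfold near_e0, e0; simpl.
  rewrite Rminus_diag, Rabs_R0; lra.
Qed.

(* Landing near [e0] at time [n <= 2^(ip)] forces a coordinate of size about [2^(-i/2)],
   because [wprod p 0 n ^ 2 = ((n+2)/2)^(1/p) <= 2^i]. *)
Lemma near_e0_iterT_coord p x i n : (1 <= p)%nat -> (1 <= i)%nat -> (n <= 2 ^ (i * p))%nat ->
  near_e0 (iterT (Bshift (weight p)) n x) -> / (4 * 2 ^ i) <= x n ^ 2.
Proof.
  intros Hp Hi Hn Hnear. unfold near_e0 in Hnear. rewrite iterT_Bshift_weight in Hnear. simpl in Hnear.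
  assert (Hw : wprod p 0 n ^ 2 <= 2 ^ i).
  { rewrite wprod_sq by auto. apply Rpower_inv_le; auto; [apply pow_lt; lra|apply wprod_base_pos|].
    rewrite <- pow_mult.
    assert (INR n <= 2 ^ (i * p)) by (apply le_INR in Hn; rewrite INR_pow2 in Hn; auto).
    assert (2 <= 2 ^ (i * p)) by (replace 2 with (2 ^ 1) at 1 by (simpl; lra); apply Rle_pow; [lra|nia]).
    simpl. lra. }
  pose proof (wprod_pos p 0 n).
  assert (1 / 2 < wprod p 0 n * Rabs (x n)).
  { rewrite <- (Rabs_pos_eq (wprod p 0 n)) by lra. rewrite <- Rabs_mult.
    pose proof (Rabs_triang_inv 1 (wprod p 0 n * x n)).
    rewrite Rabs_minus_sym, Rabs_R1 in H0. lra. }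
  assert (0 < 2 ^ i) by (apply pow_lt; lra).
  pose proof (pow2_abs (x n)). pose proof (Rabs_pos (x n)).
  apply Rmult_le_reg_l with (4 * 2 ^ i); [lra|]. rewrite Rinv_r by lra. nra.
Qed.

Section Mass.
Variable A : nat -> Prop.
Variable x : seqR.

Fixpoint mass (M : nat) : R :=
  match M with
  | O => if excluded_middle_informative (A O) then x O ^ 2 else 0
  | S m => mass m + if excluded_middle_informative (A (S m)) then x (S m) ^ 2 else 0
  end.

Lemma mass_le_psum M : mass M <= psum (fun k => x k ^ 2) (S M).
Proof.
  induction M; simpl.
  - destruct (excluded_middle_informative (A 0)); pose proof (pow2_ge_0 (x O)); lra.
  - simpl in IHM.
    destruct (excluded_middle_informative (A (S M))); pose proof (pow2_ge_0 (x (S M))); lra.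
Qed.

Lemma mass_increment a b beta : (a <= b)%nat -> 0 <= beta ->
  (forall n, (a < n <= b)%nat -> A n -> beta <= x n ^ 2) ->
  beta * (INR (count_upto A b) - INR (count_upto A a)) <= mass b - mass a.
Proof.
  intros Hab Hb H. induction b.
  - assert (a = O) by lia; subst. lra.
  - destruct (Nat.eq_dec a (S b)); [subst; lra|].
    assert (IH : beta * (INR (count_upto A b) - INR (count_upto A a)) <= mass b - mass a).
    { apply IHb; [lia|]. intros; apply H; auto; lia. }
    simpl. rewrite plus_INR.
    destruct (excluded_middle_informative (A (S b))).
    + assert (beta <= x (S b) ^ 2) by (apply H; auto; lia). simpl. lra.
    + simpl. lra.
Qed.

(* With [c_i = #(A ∩ [0, 2^(ip)])] and [m_i] the mass up to [2^(ip)], the potential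
   [4 m_i - c_i / 2^i] grows by at least [c_i / 2^(i+1)]: the [c_(i+1) - c_i] new visits
   each bring mass [2^(-i-1)/4]. *)
Definition dyadic_potential (p i : nat) : R :=
  4 * mass (2 ^ (i * p)) - INR (count_upto A (2 ^ (i * p))) / 2 ^ i.

Lemma dyadic_potential_step p i :
  (forall n, (2 ^ (i * p) < n <= 2 ^ (S i * p))%nat -> A n -> / (4 * 2 ^ S i) <= x n ^ 2) ->
  INR (count_upto A (2 ^ (i * p))) / 2 ^ S i <= dyadic_potential p (S i) - dyadic_potential p i.
Proof.
  intros Hlow. assert (0 < 2 ^ i) by (apply pow_lt; lra).
  set (ci := fun i => INR (count_upto A (2 ^ (i * p)))).
  assert (D : / (4 * 2 ^ S i) * (ci (S i) - ci i) <= mass (2 ^ (S i * p)) - mass (2 ^ (i * p))).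
  { apply mass_increment; auto.
    - apply Nat.pow_le_mono_r; lia.
    - left; apply Rinv_0_lt_compat. simpl; lra. }
  unfold dyadic_potential. fold (ci i) (ci (S i)). simpl pow in *. unfold Rdiv in *.
  set (r := / (2 * 2 ^ i)).
  assert (E1 : / (4 * (2 * 2 ^ i)) = r / 4) by (unfold r; field; lra).
  assert (E2 : / 2 ^ i = 2 * r) by (unfold r; field; lra).
  rewrite E1 in D. rewrite E2. lra.
Qed.

Lemma mass_unbounded p c N0 : 0 < c ->
  (forall N, (N0 <= N)%nat -> (0 < N)%nat -> c <= INR (count_upto A (N ^ p)) / INR N) ->
  (forall i n, (1 <= i)%nat -> (n <= 2 ^ (i * p))%nat -> A n -> / (4 * 2 ^ i) <= x n ^ 2) ->
  forall L, exists M, L < mass M.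
Proof.
  intros Hc Hdens Hlow L. set (T := dyadic_potential p).
  assert (HN0 : (N0 <= 2 ^ N0)%nat) by (apply Nat.lt_le_incl, Nat.pow_gt_lin_r; lia).
  assert (Hgrow : forall k, T N0 + INR k * (c / 2) <= T (N0 + k)%nat).
  { induction k; [simpl; rewrite Nat.add_0_r; lra|].
    rewrite S_INR. replace (N0 + S k)%nat with (S (N0 + k)) by lia. set (i := (N0 + k)%nat).
    assert (Hstep := dyadic_potential_step p i (fun n Hn HA => Hlow (S i) n ltac:(lia) ltac:(lia) HA)).
    assert (Hpos : (0 < 2 ^ i)%nat) by (pose proof (Nat.pow_nonzero 2 i); lia).
    assert (Hi : (N0 <= 2 ^ i)%nat) by (eapply Nat.le_trans; [apply HN0|]; apply Nat.pow_le_mono_r; lia).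
    assert (Hci : c * 2 ^ i <= INR (count_upto A (2 ^ (i * p)))).
    { specialize (Hdens (2 ^ i)%nat Hi Hpos). rewrite INR_pow2 in Hdens. rewrite Nat.pow_mul_r.
      assert (0 < 2 ^ i) by (apply pow_lt; lra).
      apply Rmult_le_compat_r with (r := 2 ^ i) in Hdens; [|lra].
      unfold Rdiv in Hdens. rewrite Rmult_assoc, Rinv_l in Hdens by lra. lra. }
    assert (0 < 2 ^ i) by (apply pow_lt; lra).
    assert (c / 2 <= INR (count_upto A (2 ^ (i * p))) / 2 ^ S i).
    { simpl pow. unfold Rdiv. apply Rmult_le_reg_l with (2 * 2 ^ i); [lra|]. field_simplify; lra. }
    change (N0 + k)%nat with i in IHk. unfold T in *. lra. }
  destruct (INR_unbounded ((4 * L - T N0) / (c / 2))) as [k Hk].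
  exists (2 ^ ((N0 + k) * p))%nat.
  assert (4 * L - T N0 < INR k * (c / 2)).
  { apply Rmult_lt_reg_r with (/ (c / 2)); [apply Rinv_0_lt_compat; lra|].
    rewrite Rmult_assoc, Rinv_r by lra. lra. }
  specialize (Hgrow k).
  assert (0 <= INR (count_upto A (2 ^ ((N0 + k) * p))) / 2 ^ (N0 + k)).
  { unfold Rdiv. apply Rmult_le_pos; [apply pos_INR|]. left; apply Rinv_0_lt_compat, pow_lt; lra. }
  unfold T in *. unfold dyadic_potential at 2 in Hgrow. lra.
Qed.

End Mass.

Theorem not_p_freq_hypercyclic p : (1 <= p)%nat -> ~ q_freq_hypercyclic_l2 p (Bshift (weight p)).
Proof.
  intros Hp [x [[L HL] Hvisits]].
  destruct (Hvisits near_e0 near_e0_open near_e0_nonempty) as [c [Hc [N0 Hdens]]].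
  set (A := fun n => near_e0 (iterT (Bshift (weight p)) n x)).
  destruct (mass_unbounded A x p c N0 Hc Hdens
              (fun i n Hi Hn HA => near_e0_iterT_coord p x i n Hp Hi Hn HA) L) as [M HM].
  pose proof (mass_le_psum A x M).
  pose proof (psum_le_infinite_sum (fun k => x k ^ 2) L (S M) (fun _ => pow2_ge_0 _) HL). lra.
Qed.

Fixpoint val2_fuel (f s : nat) : nat :=
  match f with
  | O => O
  | S f => if Nat.odd s then O else S (val2_fuel f (Nat.div2 s))
  end.

Definition val2 (s : nat) : nat := val2_fuel s s.
Definition odd_part (s : nat) : nat := (s / 2 ^ val2 s / 2)%nat.

Lemma val2_fuel_eq m u f : (m < f)%nat -> val2_fuel f (2 ^ m * (2 * u + 1)) = m.
Proof.
  revert f; induction m; intros f Hf; destruct f; try lia; simpl.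
  - replace (u + (u + 0) + 1 + 0)%nat with (S (2 * u)) by lia.
    rewrite Nat.odd_succ, Nat.even_mul. reflexivity.
  - replace (2 ^ m + (2 ^ m + 0))%nat with (2 * 2 ^ m)%nat by lia. rewrite <- Nat.mul_assoc.
    rewrite Nat.odd_mul. change (Nat.odd 2) with false. simpl andb.
    rewrite Nat.div2_double. f_equal. apply IHm; lia.
Qed.

Lemma val2_eq m u : val2 (2 ^ m * (2 * u + 1)) = m.
Proof.
  unfold val2. apply val2_fuel_eq.
  assert (m < 2 ^ m)%nat by (apply Nat.pow_gt_lin_r; lia). nia.
Qed.

Lemma odd_part_eq m u : odd_part (2 ^ m * (2 * u + 1)) = u.
Proof.
  unfold odd_part. rewrite val2_eq, Nat.mul_comm, Nat.div_mul by (apply Nat.pow_nonzero; lia).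
  replace (2 * u + 1)%nat with (1 + u * 2)%nat by lia. rewrite Nat.div_add by lia. simpl. lia.
Qed.

(* Digits in base [2m^2 + 1]: a digit [d] stands for the real number [(d - m^2)/m],
   so the first [m] digits of [u] describe a point of the grid [(1/m) Z ∩ [-m, m]] in [R^m]. *)
Definition dbase (m : nat) : nat := (2 * m * m + 1)%nat.
Definition digit (m u k : nat) : nat := ((u / dbase m ^ k) mod dbase m)%nat.

Lemma dbase_pos m : (1 <= dbase m)%nat.
Proof. unfold dbase; lia. Qed.

Lemma digit_le m u k : (digit m u k <= 2 * m * m)%nat.
Proof.
  unfold digit. pose proof (Nat.mod_upper_bound (u / dbase m ^ k) (dbase m)).
  unfold dbase in *. lia.
Qed.

Lemma digit_add_period m u w k : (k < m)%nat -> digit m (u + dbase m ^ m * w) k = digit m u k.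
Proof.
  intros Hk. unfold digit. set (B := dbase m). assert (HB : (B <> 0)%nat) by (unfold B, dbase; lia).
  replace (B ^ m)%nat with (B ^ k * B ^ (m - k))%nat by (rewrite <- Nat.pow_add_r; f_equal; lia).
  replace (u + B ^ k * B ^ (m - k) * w)%nat with (u + (B ^ (m - k) * w) * B ^ k)%nat by ring.
  rewrite Nat.div_add by (apply Nat.pow_nonzero; auto).
  replace (m - k)%nat with (S (m - k - 1)) by lia. simpl.
  replace (u / B ^ k + B * B ^ (m - k - 1) * w)%nat
    with (u / B ^ k + (B ^ (m - k - 1) * w) * B)%nat by ring.
  apply Nat.Div0.mod_add; auto.
Qed.

Fixpoint encode (B : nat) (d : nat -> nat) (n : nat) : nat :=
  match n with O => O | S n => (d O + B * encode B (fun k => d (S k)) n)%nat end.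

Lemma digit_encode m d n k : (forall j, (d j < dbase m)%nat) -> (k < n)%nat ->
  digit m (encode (dbase m) d n) k = d k.
Proof.
  unfold digit. set (B := dbase m). assert (HB : (B <> 0)%nat) by (unfold B, dbase; lia). intro Hd.
  revert d k Hd; induction n; intros d k Hd Hk; [lia|]. simpl encode.
  replace (d O + B * encode B (fun k => d (S k)) n)%nat
    with (d O + encode B (fun k => d (S k)) n * B)%nat by ring.
  destruct k.
  - simpl pow. rewrite Nat.div_1_r, Nat.Div0.mod_add by auto. apply Nat.mod_small; auto.
  - rewrite Nat.pow_succ_r', <- Nat.Div0.div_div, Nat.div_add by auto.
    rewrite (Nat.div_small (d O) B) by apply Hd. simpl.
    apply (IHn (fun k => d (S k))); auto. lia.
Qed.

Definition decode (m u : nat) : seqR :=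
  fun k => if (k <? m)%nat then (INR (digit m u k) - INR (m * m)) / INR m else 0.

Lemma Rabs_decode_le m u k : (1 <= m)%nat -> Rabs (decode m u k) <= INR m.
Proof.
  intros Hm. unfold decode. destruct (Nat.ltb_spec k m).
  - pose proof (digit_le m u k) as Hd. apply le_INR in Hd. rewrite !mult_INR in Hd. rewrite mult_INR.
    assert (0 < INR m) by (apply lt_0_INR; lia). pose proof (pos_INR (digit m u k)).
    simpl in Hd. apply Rabs_le. split;
      (apply Rmult_le_reg_r with (INR m); auto; unfold Rdiv; rewrite Rmult_assoc, Rinv_l by lra; nra).
  - rewrite Rabs_R0. apply pos_INR.
Qed.

(* Slot [t] of block [i] carries the target [decode m u], where [t + 1 = 2^m (2u + 1)],
   provided [1 <= m] and [8 m <= i]; small targets are thus postponed to late blocks. *)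
Definition target_ok (i t : nat) : bool := andb (1 <=? val2 (S t))%nat (8 * val2 (S t) <=? i)%nat.
Definition tsize (i t : nat) : nat := if target_ok i t then val2 (S t) else O.
Definition target (i t : nat) : seqR :=
  if target_ok i t then decode (val2 (S t)) (odd_part (S t)) else fun _ => 0.

Lemma target_ge_tsize i t k : (tsize i t <= k)%nat -> target i t k = 0.
Proof.
  unfold tsize, target. destruct (target_ok i t); auto. unfold decode.
  intros. destruct (Nat.ltb_spec k (val2 (S t))); auto; lia.
Qed.

Lemma tsize_le i t : (8 * tsize i t <= i)%nat.
Proof.
  unfold tsize, target_ok.
  destruct (1 <=? val2 (S t))%nat eqn:E1; destruct (8 * val2 (S t) <=? i)%nat eqn:E2;
    simpl; try lia. apply Nat.leb_le; auto.
Qed.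

Lemma target_sq_le i t k : target i t k ^ 2 <= INR (tsize i t) ^ 2.
Proof.
  assert (H : Rabs (target i t k) <= INR (tsize i t)).
  { unfold tsize, target, target_ok.
    destruct (1 <=? val2 (S t))%nat eqn:E1; destruct (8 * val2 (S t) <=? i)%nat eqn:E2; simpl;
      try (rewrite Rabs_R0; simpl; lra).
    apply Rabs_decode_le. apply Nat.leb_le; auto. }
  rewrite <- (pow2_abs (target i t k)). pose proof (Rabs_pos (target i t k)). nra.
Qed.

(* Slots [t] with [t + 1 = 2^m (2 (u0 + dbase m ^ m * w) + 1)] all carry [decode m u0]
   (the extra digits lie beyond position [m]); they recur with period [slot_period m]. *)
Definition slot_period (m : nat) : nat := (2 ^ (m + 1) * dbase m ^ m)%nat.

Definition slot_index (m u0 w : nat) : nat := (2 ^ m * (2 * u0 + 1) - 1 + slot_period m * w)%nat.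

Lemma slot_period_pos m : (1 <= slot_period m)%nat.
Proof.
  unfold slot_period. pose proof (Nat.pow_nonzero 2 (m + 1)).
  pose proof (Nat.pow_nonzero (dbase m) m). pose proof (dbase_pos m). nia.
Qed.

Lemma slot_index_succ m u0 w :
  S (slot_index m u0 w) = (2 ^ m * (2 * (u0 + dbase m ^ m * w) + 1))%nat.
Proof.
  unfold slot_index, slot_period. assert (1 <= 2 ^ m)%nat by (pose proof (Nat.pow_nonzero 2 m); lia).
  rewrite Nat.pow_add_r. simpl (2 ^ 1)%nat. nia.
Qed.

Lemma target_slot_index i m u0 w k : (1 <= m)%nat -> (8 * m <= i)%nat ->
  target i (slot_index m u0 w) k = decode m u0 k.
Proof.
  intros Hm Hi. unfold target, target_ok.
  rewrite slot_index_succ, val2_eq, odd_part_eq.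
  destruct (Nat.leb_spec 1 m); [|lia]. destruct (Nat.leb_spec (8 * m) i); [|lia]. simpl.
  unfold decode. destruct (Nat.ltb_spec k m); auto. rewrite digit_add_period; auto.
Qed.

Lemma slot_index_lt_succ m u0 w : (slot_index m u0 w < slot_index m u0 (S w))%nat.
Proof. unfold slot_index. pose proof (slot_period_pos m). nia. Qed.

Lemma round_to_grid (zk : R) (m : nat) : (1 <= m)%nat -> Rabs zk <= INR m - 1 ->
  exists d : nat, (d <= 2 * m * m)%nat /\ Rabs (zk - (INR d - INR (m * m)) / INR m) <= / INR m.
Proof.
  intros Hm Hz. assert (Hm0 : 1 <= INR m) by (apply (le_INR 1); auto).
  set (f := Int_part (zk * INR m)). destruct (base_Int_part (zk * INR m)) as [H1 H2]. fold f in H1, H2.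
  assert (Hzm : Rabs (zk * INR m) <= INR m * INR m - INR m).
  { rewrite Rabs_mult, (Rabs_pos_eq (INR m)) by lra. nra. }
  pose proof (Rle_abs (zk * INR m)). pose proof (Rle_abs (- (zk * INR m))). rewrite Rabs_Ropp in *.
  assert (Hf1 : (- Z.of_nat (m * m) - 1 < f)%Z).
  { apply lt_IZR. rewrite minus_IZR, opp_IZR, <- INR_IZR_INZ, mult_INR. lra. }
  assert (Hf2 : (f <= Z.of_nat (m * m))%Z).
  { apply le_IZR. rewrite <- INR_IZR_INZ, mult_INR. lra. }
  exists (Z.to_nat (f + Z.of_nat (m * m))). split; [lia|].
  rewrite INR_IZR_INZ, Z2Nat.id by lia. rewrite plus_IZR, <- INR_IZR_INZ.
  replace (IZR f + INR (m * m) - INR (m * m)) with (IZR f) by ring.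
  replace (zk - IZR f / INR m) with ((zk * INR m - IZR f) / INR m) by (field; lra).
  unfold Rdiv. rewrite Rabs_mult, (Rabs_pos_eq (/ INR m)) by (left; apply Rinv_0_lt_compat; lra).
  rewrite Rabs_pos_eq by lra. rewrite <- (Rmult_1_l (/ INR m)) at 2.
  apply Rmult_le_compat_r; [left; apply Rinv_0_lt_compat|]; lra.
Qed.

(* Truncate [z] to [m] coordinates and round each to the grid of mesh [1/m];
   for large [m] both errors are small. *)
Lemma decode_dense (z : seqR) Lz (Hz : infinite_sum (fun k => z k ^ 2) Lz) d (Hd : 0 < d) :
  exists m u, (1 <= m)%nat /\ forall M, psum (fun k => (z k - decode m u k) ^ 2) M <= d.
Proof.
  assert (Hz0 : forall k, 0 <= z k ^ 2) by (intros; apply pow2_ge_0).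
  destruct (Hz (d / 2) ltac:(lra)) as [N HN].
  specialize (HN N (le_n N)). rewrite sum_f_R0_psum in HN. unfold Rdist in HN. apply Rabs_def2 in HN.
  set (K := S N) in *.
  assert (HLz : forall n, psum (fun k => z k ^ 2) n <= Lz) by (intros; apply psum_le_infinite_sum; auto).
  assert (Hzk : forall k, Rabs (z k) <= sqrt Lz).
  { intros k. apply Rabs_le_sqrt. specialize (HLz (S k)). cbn [psum] in HLz.
    pose proof (psum_ge0 (fun k => z k ^ 2) k Hz0). lra. }
  destruct (INR_unbounded (sqrt Lz + 1 + 2 / d + INR K + 1)) as [m Hm].
  pose proof (sqrt_pos Lz). assert (0 < 2 / d) by (apply Rdiv_lt_0_compat; lra). pose proof (pos_INR K).
  assert (Hm1 : (1 <= m)%nat) by (apply INR_lt; simpl; lra).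
  assert (HmK : (K <= m)%nat) by (apply INR_le; lra).
  assert (Hm0 : 1 <= INR m) by (apply (le_INR 1); auto).
  assert (Hdig : forall k, exists dk : nat, (dk <= 2 * m * m)%nat /\
                   Rabs (z k - (INR dk - INR (m * m)) / INR m) <= / INR m).
  { intro k. apply round_to_grid; auto. specialize (Hzk k). lra. }
  destruct (choice _ Hdig) as [dd Hdd].
  set (d' := fun k => Nat.min (dd k) (2 * m * m)).
  exists m, (encode (dbase m) d' m). split; auto. intro M.
  assert (Hd' : forall j, (d' j < dbase m)%nat) by (intros; unfold d', dbase; lia).
  eapply Rle_trans; [apply (psum_mono _ M (m + M)); [intros; apply pow2_ge_0|lia]|].
  rewrite psum_split.
  assert (Hhead : psum (fun k => (z k - decode m (encode (dbase m) d' m) k) ^ 2) m <= d / 2).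
  { eapply Rle_trans; [apply (psum_le _ (fun _ => / INR m * / INR m))|].
    - intros k Hk. unfold decode. destruct (Nat.ltb_spec k m); [|lia].
      rewrite (digit_encode m d' m k Hd' Hk).
      destruct (Hdd k) as [Hk1 Hk2]. unfold d'. rewrite Nat.min_l by auto.
      rewrite <- pow2_abs. assert (0 < / INR m) by (apply Rinv_0_lt_compat; lra).
      pose proof (Rabs_pos (z k - (INR (dd k) - INR (m * m)) / INR m)). simpl. nra.
    - rewrite psum_const. replace (INR m * (/ INR m * / INR m)) with (/ INR m) by (field; lra).
      assert (2 / d < INR m) by lra.
      assert (/ INR m < / (2 / d)) by (apply Rinv_lt_contravar; auto; nra).
      replace (/ (2 / d)) with (d / 2) in H3 by (field; lra). lra. }
  assert (Htail : psum (fun j => (z (m + j)%nat - decode m (encode (dbase m) d' m) (m + j)%nat) ^ 2) M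
                  <= d / 2).
  { rewrite (psum_ext _ (fun j => z (m + j)%nat ^ 2)).
    2:{ intros j _. unfold decode. destruct (Nat.ltb_spec (m + j) m); [lia|]. f_equal. ring. }
    pose proof (HLz (m + M)%nat) as Hsplit. rewrite psum_split in Hsplit.
    pose proof (psum_mono (fun k => z k ^ 2) K m Hz0 HmK). lra. }
  lra.
Qed.

Lemma pow4_pow2 e : (4 ^ e = 2 ^ (2 * e))%nat.
Proof. rewrite Nat.pow_mul_r. reflexivity. Qed.

Lemma div_eq_of_between L c i : (0 < c)%nat -> (c * i <= L)%nat -> (L < c * S i)%nat -> (L / c = i)%nat.
Proof.
  intros. symmetry. apply Nat.div_unique with (L - c * i)%nat; [|lia].
  rewrite Nat.mul_succ_r in H1. lia.
Qed.

Lemma log2_div_spec e N : (1 <= e)%nat -> (1 <= N)%nat ->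
  (4 ^ (e * (Nat.log2 N / (2 * e))) <= N /\ N < 4 ^ (e * S (Nat.log2 N / (2 * e))))%nat.
Proof.
  intros He HN. pose proof (Nat.log2_spec N HN) as [H1 H2].
  assert (Hc : (2 * e <> 0)%nat) by lia.
  pose proof (Nat.Div0.mul_div_le (Nat.log2 N) (2 * e)).
  pose proof (Nat.div_mod_eq (Nat.log2 N) (2 * e)).
  pose proof (Nat.mod_upper_bound (Nat.log2 N) (2 * e) Hc).
  rewrite !pow4_pow2. split.
  - eapply Nat.le_trans; [|apply H1]. apply Nat.pow_le_mono_r; lia.
  - eapply Nat.lt_le_trans; [apply H2|]. apply Nat.pow_le_mono_r; [lia|].
    set (L := Nat.log2 N) in *. set (q := (L / (2 * e))%nat) in *. nia.
Qed.

Lemma log2_div_ge e N J : (1 <= e)%nat -> (4 ^ (e * J) <= N)%nat -> (J <= Nat.log2 N / (2 * e))%nat.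
Proof.
  intros He HN. apply Nat.div_le_lower_bound; [lia|]. rewrite pow4_pow2 in HN.
  apply Nat.log2_le_pow2; [pose proof (Nat.pow_nonzero 2 (2 * (e * J))); lia|].
  replace (2 * e * J)%nat with (2 * (e * J))%nat by lia. auto.
Qed.

Lemma cube_le_pow4 m : (m ^ 3 <= 4 ^ m)%nat.
Proof.
  induction m; [simpl; lia|].
  destruct (Nat.le_gt_cases m 2).
  - destruct m as [|[|[|]]]; simpl; lia.
  - rewrite (Nat.pow_succ_r' 4 m). assert ((S m) ^ 3 <= 4 * m ^ 3)%nat.
    { rewrite !Nat.pow_succ_r', !Nat.pow_0_r.
      assert (m * m >= 3 * m)%nat by nia. assert (m * (m * m) >= 3 * (m * m))%nat by nia. nia. }
    lia.
Qed.

Lemma cube_mul_pow4_le m e : (4 * m <= e)%nat -> INR m ^ 3 * 4 ^ m <= 2 ^ e.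
Proof.
  intros He. pose proof (cube_le_pow4 m) as Hc. apply le_INR in Hc. rewrite pow_INR, INR_pow4 in Hc.
  assert (0 < 4 ^ m) by (apply pow_lt; lra).
  apply Rle_trans with (4 ^ m * 4 ^ m); [nra|].
  replace (4 ^ m * 4 ^ m) with (2 ^ (4 * m)).
  - apply Rle_pow; [lra|auto].
  - rewrite <- pow_add. replace (4 * m)%nat with (2 * (m + m))%nat by lia.
    rewrite pow_mult. f_equal. lra.
Qed.

Lemma INR_succ_le_pow4 m : INR m + 1 <= 4 ^ m.
Proof.
  induction m; [simpl; lra|]. rewrite S_INR. simpl pow.
  assert (1 <= 4 ^ m) by (apply pow_R1_Rle; lra). lra.
Qed.

Lemma psum_window t K a N : 0 <= a ->
  psum (fun u => if andb (t <? u)%nat (u <? t + 1 + K)%nat then a else 0) N <= INR K * a.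
Proof.
  intros Ha. destruct (Nat.le_gt_cases N (t + 1)).
  - rewrite (psum_ext _ (fun _ => 0)).
    + rewrite psum_const. pose proof (pos_INR K). nra.
    + intros u Hu. destruct (Nat.ltb_spec t u); simpl; auto; lia.
  - replace N with (t + 1 + (N - (t + 1)))%nat by lia. rewrite psum_split.
    rewrite (psum_ext (fun u => if andb (t <? u)%nat (u <? t + 1 + K)%nat then a else 0) (fun _ => 0)).
    2:{ intros u Hu. destruct (Nat.ltb_spec t u); simpl; auto; lia. }
    rewrite psum_const, Rmult_0_r, Rplus_0_l.
    eapply Rle_trans; [|apply (psum_indicator K a (N - (t + 1)) Ha)]. right. apply psum_ext. intros j _.
    destruct (Nat.ltb_spec t (t + 1 + j)); [|lia]. simpl.
    destruct (Nat.ltb_spec (t + 1 + j) (t + 1 + K)); destruct (Nat.ltb_spec j K); auto; lia.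
Qed.

Lemma psum_single i E N : 0 <= E -> psum (fun j => if (j =? i)%nat then E else 0) N <= E.
Proof.
  intros HE.
  assert (H : forall N, psum (fun j => if (j =? i)%nat then E else 0) N = if (i <? N)%nat then E else 0).
  { intro n; induction n; simpl psum; auto. rewrite IHn.
    destruct (Nat.eqb_spec n i); destruct (Nat.ltb_spec i n); destruct (Nat.ltb_spec i (S n));
      try lia; lra. }
  rewrite H. destruct (_ <? _)%nat; lra.
Qed.

Lemma psum_geom_tail i N : psum (fun j => if (i <? j)%nat then / 2 ^ j else 0) N <= / 2 ^ i.
Proof.
  set (g := fun j => if (i <? j)%nat then / 2 ^ j else 0).
  assert (Hg : forall j, 0 <= g j).
  { intros; unfold g. destruct (_ <? _)%nat; [left; apply Rinv_0_lt_compat, pow_lt|]; lra. }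
  eapply Rle_trans; [apply (psum_mono g N (i + 1 + N)); auto; lia|].
  rewrite psum_split, (psum_ext g (fun _ => 0)).
  2:{ intros; unfold g. destruct (Nat.ltb_spec i k); auto; lia. }
  rewrite psum_const, Rmult_0_r, Rplus_0_l.
  rewrite (psum_ext _ (fun j => / 2 ^ (i + 1) * / 2 ^ j)).
  2:{ intros; unfold g. destruct (Nat.ltb_spec i (i + 1 + k)); [|lia]. rewrite pow_add, Rinv_mult. auto. }
  rewrite psum_scal. pose proof (psum_geom N).
  rewrite pow_add, Rinv_mult. simpl pow. rewrite Rmult_1_r.
  assert (0 < / 2 ^ i) by (apply Rinv_0_lt_compat, pow_lt; lra). nra.
Qed.

Lemma count_upto_mono A a b : (a <= b)%nat -> (count_upto A a <= count_upto A b)%nat.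
Proof. intros H; induction H; auto. simpl. lia. Qed.

Lemma count_upto_ge_increasing A (g : nat -> nat) W :
  (forall w, (w < S W)%nat -> A (g w)) -> (forall w, (g w < g (S w))%nat) ->
  (S W <= count_upto A (g W))%nat.
Proof.
  intros HA Hg. induction W.
  - pose proof (HA O ltac:(lia)). destruct (g O); simpl;
      destruct (excluded_middle_informative _); try contradiction; lia.
  - assert (IH : (S W <= count_upto A (g W))%nat) by (apply IHW; intros; apply HA; lia).
    assert (Hlast : (count_upto A (g W) + 1 <= count_upto A (g (S W)))%nat).
    { pose proof (Hg W). pose proof (HA (S W) ltac:(lia)) as HAS.
      destruct (g (S W)) as [|b]; [lia|]. simpl.
      destruct (excluded_middle_informative (A (S b))); [|contradiction].
      pose proof (count_upto_mono A (g W) b ltac:(lia)). lia. }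
    lia.
Qed.

Lemma orbit_error_bound_small K : exists I, forall i, (I <= i)%nat ->
  2 * 2 ^ (i / 2) / 2 ^ i + 2 / 2 ^ i <= 4 / 2 ^ K.
Proof.
  exists (2 * K)%nat. intros i Hi.
  pose proof (Nat.div_mod_eq i 2). pose proof (Nat.mod_upper_bound i 2).
  assert (K <= i - i / 2)%nat by lia.
  assert (0 < 2 ^ (i / 2)) by (apply pow_lt; lra).
  assert (E : 2 ^ i = 2 ^ (i / 2) * 2 ^ (i - i / 2)) by (rewrite <- pow_add; f_equal; lia).
  assert (2 ^ K <= 2 ^ (i - i / 2)) by (apply Rle_pow; [lra|lia]).
  assert (2 ^ K <= 2 ^ i) by (apply Rle_pow; [lra|lia]).
  assert (0 < 2 ^ K) by (apply pow_lt; lra).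
  replace (2 * 2 ^ (i / 2) / 2 ^ i) with (2 / 2 ^ (i - i / 2)) by (rewrite E; field; split; lra).
  unfold Rdiv.
  assert (/ 2 ^ (i - i / 2) <= / 2 ^ K) by (apply Rinv_le_contravar; lra).
  assert (/ 2 ^ i <= / 2 ^ K) by (apply Rinv_le_contravar; lra). lra.
Qed.

Lemma in_ball_of_common_approx (U : seqR -> Prop) z Lz v y eps :
  infinite_sum (fun k => z k ^ 2) Lz -> 0 < eps ->
  (forall w, in_l2 w -> l2dist_lt z w eps -> U w) ->
  (forall M, psum (fun k => (z k - y k) ^ 2) M <= eps ^ 2 / 8) ->
  (forall M, psum (fun k => (v k - y k) ^ 2) M <= eps ^ 2 / 8) -> U v.
Proof.
  intros HLz Heps Hball Hzy Hvy. set (dl := eps ^ 2 / 8) in *.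
  assert (Hdl : 0 < dl) by (unfold dl; apply Rdiv_lt_0_compat; [apply pow_lt|]; lra).
  assert (Hz : forall M, psum (fun k => z k ^ 2) M <= Lz)
    by (intros; apply psum_le_infinite_sum; auto; intros; apply pow2_ge_0).
  apply Hball.
  - destruct (infinite_sum_of_bounded_psum (fun k => v k ^ 2) (2 * dl + 4 * Lz + 4 * dl)) as [l [Hl _]].
    + intros; apply pow2_ge_0.
    + intro M. eapply Rle_trans.
      { apply (psum_le _ (fun k => 2 * (v k - y k) ^ 2 + 4 * z k ^ 2 + 4 * (z k - y k) ^ 2)).
        intros k _. pose proof (sq_sub_le (v k) (y k) 0). pose proof (sq_sub_le 0 (z k) (y k)).
        replace ((0 - z k) ^ 2) with (z k ^ 2) in H0 by ring.
        replace ((y k - 0) ^ 2) with ((0 - y k) ^ 2) in H by ring.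
        replace (v k - 0) with (v k) in H by ring. lra. }
      rewrite !psum_add, !psum_scal. specialize (Hvy M). specialize (Hz M). specialize (Hzy M). lra.
    + exists l; auto.
  - destruct (infinite_sum_of_bounded_psum (fun k => (z k - v k) ^ 2) (4 * dl)) as [l [Hl Hl2]].
    + intros; apply pow2_ge_0.
    + intro M. eapply Rle_trans.
      { apply (psum_le _ (fun k => 2 * (z k - y k) ^ 2 + 2 * (v k - y k) ^ 2)).
        intros k _. pose proof (sq_sub_le (z k) (y k) (v k)).
        replace ((y k - v k) ^ 2) with ((v k - y k) ^ 2) in H by ring. lra. }
      rewrite psum_add, !psum_scal. specialize (Hvy M). specialize (Hzy M). lra.
    + exists l. split; auto. apply sqrt_lt_of_lt_sq; auto. unfold dl in Hl2.
      assert (0 < eps ^ 2) by (apply pow_lt; lra). lra.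
Qed.

Lemma INR_div_ge n d : (0 < d)%nat -> (d <= n)%nat -> INR n / (2 * INR d) <= INR (n / d).
Proof.
  intros Hd Hn. pose proof (Nat.div_mod_eq n d). pose proof (Nat.mod_upper_bound n d ltac:(lia)).
  assert (Hq : (1 <= n / d)%nat) by (apply Nat.div_le_lower_bound; lia).
  assert (Hn2 : (n <= 2 * d * (n / d))%nat) by nia.
  apply le_INR in Hn2. rewrite !mult_INR in Hn2. simpl in Hn2.
  assert (0 < INR d) by (apply lt_0_INR; lia).
  unfold Rdiv. apply Rmult_le_reg_r with (2 * INR d); [lra|].
  rewrite Rmult_assoc, Rinv_l by lra. lra.
Qed.

Section HypercyclicVector.
Variable p : nat.
Hypothesis hp : (1 <= p)%nat.

Definition nslots (i : nat) : nat := (4 ^ (p * i))%nat.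
Definition slot_len (i : nat) : nat := (4 ^ (p * p * i))%nat.
Definition block_start (i : nat) : nat := (4 ^ (p * (p + 1) * i))%nat.
Definition slot_start (i t : nat) : nat := (block_start i + t * slot_len i)%nat.
Definition block_of (n : nat) : nat := (Nat.log2 n / (2 * (p * (p + 1))))%nat.

Lemma block_start_eq i : block_start i = (nslots i * slot_len i)%nat.
Proof. unfold block_start, nslots, slot_len. rewrite <- Nat.pow_add_r. f_equal. nia. Qed.

Lemma nslots_pos i : (1 <= nslots i)%nat.
Proof. unfold nslots. pose proof (Nat.pow_nonzero 4 (p * i)). lia. Qed.

Lemma slot_len_pos i : (1 <= slot_len i)%nat.
Proof. unfold slot_len. pose proof (Nat.pow_nonzero 4 (p * p * i)). lia. Qed.

Lemma block_start_pos i : (1 <= block_start i)%nat.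
Proof. unfold block_start. pose proof (Nat.pow_nonzero 4 (p * (p + 1) * i)). lia. Qed.

Lemma block_start_ge i : (i <= block_start i)%nat.
Proof.
  unfold block_start. assert (i < 4 ^ i)%nat by (apply Nat.pow_gt_lin_r; lia).
  assert (4 ^ i <= 4 ^ (p * (p + 1) * i))%nat by (apply Nat.pow_le_mono_r; nia). lia.
Qed.

Lemma block_start_lt i j : (i < j)%nat -> (16 * block_start i <= block_start j)%nat.
Proof.
  intros Hij. unfold block_start.
  replace (p * (p + 1) * j)%nat with (2 + p * (p + 1) * i + (p * (p + 1) * j - 2 - p * (p + 1) * i))%nat
    by nia.
  rewrite !Nat.pow_add_r. pose proof (Nat.pow_nonzero 4 (p * (p + 1) * j - 2 - p * (p + 1) * i)).
  simpl (4 ^ 2)%nat. nia.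
Qed.

Lemma block_of_eq n i : (block_start i <= n)%nat -> (n < block_start (S i))%nat -> block_of n = i.
Proof.
  intros H1 H2. pose proof (block_start_pos i). unfold block_of, block_start in *.
  apply div_eq_of_between; [nia| |].
  - apply Nat.log2_le_pow2; [lia|]. rewrite pow4_pow2 in H1.
    replace (2 * (p * (p + 1)) * i)%nat with (2 * (p * (p + 1) * i))%nat by lia. auto.
  - apply Nat.log2_lt_pow2; [lia|]. rewrite pow4_pow2 in H2.
    replace (2 * (p * (p + 1)) * S i)%nat with (2 * (p * (p + 1) * S i))%nat by lia. auto.
Qed.

Lemma block_of_spec n : (1 <= n)%nat -> (block_start (block_of n) <= n < block_start (S (block_of n)))%nat.
Proof.
  intros Hn. unfold block_of, block_start.
  pose proof (log2_div_spec (p * (p + 1)) n ltac:(nia) Hn). lia.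
Qed.

Lemma slot_start_end_le i t : (t < nslots i)%nat -> (slot_start i t + slot_len i <= 2 * block_start i)%nat.
Proof. intros. unfold slot_start. rewrite block_start_eq. nia. Qed.

Lemma slot_start_lt i a b : (a < b)%nat -> (slot_start i a < slot_start i b)%nat.
Proof. intros. unfold slot_start. pose proof (slot_len_pos i). nia. Qed.

Lemma slot_start_decompose i t k : (t < nslots i)%nat -> (k < slot_len i)%nat ->
  block_of (slot_start i t + k) = i /\
  ((slot_start i t + k - block_start i) / slot_len i = t)%nat /\
  ((slot_start i t + k - block_start i) mod slot_len i = k)%nat.
Proof.
  intros Ht Hk. pose proof (slot_start_end_le i t Ht).
  pose proof (block_start_lt i (S i) ltac:(lia)). pose proof (slot_len_pos i).
  split; [apply block_of_eq; unfold slot_start in *; lia|].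
  replace (slot_start i t + k - block_start i)%nat with (k + t * slot_len i)%nat by (unfold slot_start; lia).
  split.
  - rewrite Nat.div_add by lia. rewrite Nat.div_small by lia. lia.
  - rewrite Nat.Div0.mod_add by lia. apply Nat.mod_small; lia.
Qed.

(* [spread G] lays out an array [G i t k] (block, slot, offset) along [nat];
   positions not covered by a slot get [0]. *)
Definition spread (G : nat -> nat -> nat -> R) (J : nat) : R :=
  if (J =? 0)%nat then 0 else
  let i := block_of J in let r := (J - block_start i)%nat in
  if ((r / slot_len i) <? nslots i)%nat then G i (r / slot_len i)%nat (r mod slot_len i)%nat else 0.

Definition block_total (G : nat -> nat -> nat -> R) (i : nat) : R :=
  psum (fun t => psum (fun k => G i t k) (slot_len i)) (nslots i).

Lemma spread_slot_start G i t k : (t < nslots i)%nat -> (k < slot_len i)%nat ->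
  spread G (slot_start i t + k) = G i t k.
Proof.
  intros Ht Hk. destruct (slot_start_decompose i t k Ht Hk) as [E1 [E2 E3]].
  unfold spread. pose proof (block_start_pos i). unfold slot_start in *.
  destruct (Nat.eqb_spec (block_start i + t * slot_len i + k) 0); [lia|].
  rewrite E1, E2, E3. destruct (Nat.ltb_spec t (nslots i)); [auto|lia].
Qed.

Lemma spread_ge0 G J : (forall a b c, 0 <= G a b c) -> 0 <= spread G J.
Proof. intros. unfold spread. destruct (J =? 0)%nat; [lra|]. destruct (_ <? _)%nat; auto; lra. Qed.

Lemma psum_spread G I : psum (spread G) (block_start I) = psum (block_total G) I.
Proof.
  induction I.
  - unfold block_start. rewrite Nat.mul_0_r. simpl. unfold spread. simpl. lra.
  - pose proof (block_start_lt I (S I) ltac:(lia)).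
    pose proof (block_start_eq I). pose proof (block_start_pos I). pose proof (slot_len_pos I).
    replace (block_start (S I)) with (block_start I + (nslots I * slot_len I
      + (block_start (S I) - block_start I - nslots I * slot_len I)))%nat by lia.
    rewrite psum_split, IHI. simpl psum. f_equal.
    rewrite psum_split, psum_blocks.
    rewrite (psum_ext (fun j => spread G (block_start I + (nslots I * slot_len I + j))%nat) (fun _ => 0)).
    2:{ intros j Hj. unfold spread.
        destruct (Nat.eqb_spec (block_start I + (nslots I * slot_len I + j)) 0); [lia|].
        rewrite (block_of_eq _ I) by lia.
        replace (block_start I + (nslots I * slot_len I + j) - block_start I)%nat
          with (j + nslots I * slot_len I)%nat by lia.
        rewrite Nat.div_add by lia.
        destruct (Nat.ltb_spec (j / slot_len I + nslots I) (nslots I)); [lia|auto]. }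
    rewrite psum_const, Rmult_0_r, Rplus_0_r. unfold block_total.
    apply psum_ext. intros t Ht. apply psum_ext. intros k Hk.
    rewrite <- (spread_slot_start G I t k); auto. f_equal. unfold slot_start. lia.
Qed.

Lemma tsize_lt_slot_len i t : (tsize i t < slot_len i)%nat.
Proof.
  pose proof (tsize_le i t). unfold slot_len.
  assert (i < 4 ^ i)%nat by (apply Nat.pow_gt_lin_r; lia).
  assert (1 <= p * p)%nat by nia.
  assert (4 ^ i <= 4 ^ (p * p * i))%nat by (apply Nat.pow_le_mono_r; [lia|nia]). lia.
Qed.

Lemma wprod_sq_ge k d R : 0 < R -> (INR k + 2) * R ^ p <= INR d -> R <= wprod p k d ^ 2.
Proof.
  intros HR H. rewrite wprod_sq by auto. apply Rpower_inv_ge; auto.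
  pose proof (pos_INR k). apply Rmult_le_reg_l with (INR k + 2); [lra|].
  unfold Rdiv. rewrite (Rmult_comm (INR k + INR d + 2)), <- Rmult_assoc, Rinv_r by lra. lra.
Qed.

Lemma pow_div_pow4_le k m A : (k < m)%nat -> 0 <= A -> (INR k + 2) * (A * / 4 ^ m) ^ p <= A ^ p.
Proof.
  intros Hk HA. rewrite Rpow_mult_distr, pow_inv, <- pow_mult.
  assert (INR k + 2 <= 4 ^ m).
  { pose proof (INR_succ_le_pow4 m). assert (H1 : (S k <= m)%nat) by lia.
    apply le_INR in H1. rewrite S_INR in H1. lra. }
  assert (4 ^ m <= 4 ^ (m * p)) by (apply Rle_pow; [lra|nia]).
  assert (0 < 4 ^ (m * p)) by (apply pow_lt; lra). assert (0 <= A ^ p) by (apply pow_le; auto).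
  rewrite <- Rmult_assoc, Rmult_comm, <- Rmult_assoc.
  rewrite <- (Rmult_1_l (A ^ p)) at 2. apply Rmult_le_compat_r; auto.
  apply Rmult_le_reg_r with (4 ^ (m * p)); auto.
  replace (/ 4 ^ (m * p) * (INR k + 2) * 4 ^ (m * p)) with (INR k + 2) by (field; lra). lra.
Qed.

Lemma psum_target_div_wprod_le i t d R N : 0 < R ->
  (forall k, (k < tsize i t)%nat -> R <= wprod p k d ^ 2) ->
  psum (fun k => target i t k ^ 2 / wprod p k d ^ 2) N <= INR (tsize i t) ^ 3 / R.
Proof.
  intros HR H.
  replace (INR (tsize i t) ^ 3 / R) with (INR (tsize i t) * (INR (tsize i t) ^ 2 / R)) by (field; lra).
  apply psum_le_supp.
  - apply Rmult_le_pos; [apply pow2_ge_0|left; apply Rinv_0_lt_compat; auto].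
  - intros k Hk. rewrite (target_ge_tsize i t k Hk). unfold Rdiv. simpl. rewrite !Rmult_0_l. lra.
  - intros k Hk. specialize (H k Hk). pose proof (wprod_pos p k d).
    assert (0 < wprod p k d ^ 2) by (apply pow_lt; auto).
    pose proof (target_sq_le i t k). unfold Rdiv. apply Rmult_le_compat; auto.
    + apply pow2_ge_0.
    + left; apply Rinv_0_lt_compat; auto.
    + apply Rinv_le_contravar; auto.
Qed.

Lemma psum_target_div_wprod_le_pow i t d A N : 0 < A -> A ^ p <= INR d ->
  psum (fun k => target i t k ^ 2 / wprod p k d ^ 2) N <= INR (tsize i t) ^ 3 * 4 ^ (tsize i t) / A.
Proof.
  intros HA HAd. assert (0 < 4 ^ tsize i t) by (apply pow_lt; lra).
  assert (HR : 0 < A * / 4 ^ tsize i t) by (apply Rmult_lt_0_compat; auto; apply Rinv_0_lt_compat; auto).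
  eapply Rle_trans; [apply (psum_target_div_wprod_le i t d _ N HR)|].
  - intros k Hk. apply wprod_sq_ge; auto. eapply Rle_trans; [|apply HAd].
    apply pow_div_pow4_le; auto. lra.
  - right. field. split; lra.
Qed.

(* Slot [t] of block [i] stores [target i t] divided by the orbit factor, so that
   [B_w^(slot_start i t)] moves it exactly onto [target i t]. *)
Definition hc_vector : seqR :=
  spread (fun i t k => target i t k / wprod p k (slot_start i t)).

Lemma block_total_hc_vector_le i :
  block_total (fun i t k => target i t k ^ 2 / wprod p k (slot_start i t) ^ 2) i <= / 2 ^ i.
Proof.
  unfold block_total.
  assert (Hslot : forall t, (t < nslots i)%nat ->
    psum (fun k => target i t k ^ 2 / wprod p k (slot_start i t) ^ 2) (slot_len i)
      <= 2 ^ i * / 4 ^ ((p + 1) * i)).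
  { intros t Ht. assert (0 < 4 ^ ((p + 1) * i)) by (apply pow_lt; lra).
    eapply Rle_trans; [apply psum_target_div_wprod_le_pow; eauto|].
    - rewrite <- pow_mult. unfold slot_start, block_start. rewrite plus_INR, mult_INR, INR_pow4.
      replace ((p + 1) * i * p)%nat with (p * (p + 1) * i)%nat by lia.
      pose proof (pos_INR t); pose proof (pos_INR (slot_len i)). nra.
    - unfold Rdiv. apply Rmult_le_compat_r; [left; apply Rinv_0_lt_compat; auto|].
      apply cube_mul_pow4_le. pose proof (tsize_le i t). lia. }
  eapply Rle_trans; [apply psum_le; intros t Ht; apply (Hslot t Ht)|].
  rewrite psum_const. unfold nslots. rewrite INR_pow4.
  replace ((p + 1) * i)%nat with (p * i + i)%nat by lia. rewrite pow_add.
  assert (0 < 4 ^ (p * i)) by (apply pow_lt; lra). assert (0 < 2 ^ i) by (apply pow_lt; lra).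
  replace (4 ^ i) with (2 ^ i * 2 ^ i) by (rewrite <- Rpow_mult_distr; f_equal; lra).
  right. field. lra.
Qed.

Lemma hc_vector_in_l2 : in_l2 hc_vector.
Proof.
  destruct (infinite_sum_of_bounded_psum (fun J => hc_vector J ^ 2) 2) as [l [Hl _]].
  - intros; apply pow2_ge_0.
  - intro N. eapply Rle_trans.
    { apply (psum_mono (fun J => hc_vector J ^ 2) N (block_start N)); [intros; apply pow2_ge_0|].
      apply block_start_ge. }
    rewrite (psum_ext _ (spread (fun i t k => target i t k ^ 2 / wprod p k (slot_start i t) ^ 2))).
    2:{ intros J _. unfold hc_vector, spread. destruct (J =? 0)%nat; [simpl; lra|].
        destruct (_ <? _)%nat; [|simpl; lra]. unfold Rdiv. rewrite Rpow_mult_distr, pow_inv. auto. }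
    rewrite psum_spread. eapply Rle_trans; [|apply (psum_geom N)].
    apply psum_le. intros; apply block_total_hc_vector_le.
  - exists l; auto.
Qed.

Section OrbitError.
Variables i t : nat.
Hypothesis ht : (t < nslots i)%nat.

Let n := slot_start i t.

(* After [n] steps, slot [(i', t')] with [slot_start i' t' > n] sits at distance
   [slot_start i' t' - n] from the origin; [err_arr] records its squared contribution. *)
Definition err_arr (i' t' k : nat) : R :=
  if (n <? slot_start i' t')%nat then target i' t' k ^ 2 / wprod p k (slot_start i' t' - n) ^ 2 else 0.

Lemma err_arr_ge0 i' t' k : 0 <= err_arr i' t' k.
Proof.
  unfold err_arr. destruct (_ <? _)%nat; [|lra].
  apply Rmult_le_pos; [apply pow2_ge_0|left; apply Rinv_0_lt_compat, pow_lt, wprod_pos].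
Qed.

Lemma err_arr_eq0 i' t' k : (slot_start i' t' <= n)%nat -> err_arr i' t' k = 0.
Proof. intros. unfold err_arr. destruct (Nat.ltb_spec n (slot_start i' t')); auto; lia. Qed.

Lemma slot_start_ge1 : (1 <= n)%nat.
Proof. unfold n, slot_start. pose proof (block_start_pos i). lia. Qed.

Lemma block_of_slot_start i' t' : (t' < nslots i')%nat -> block_of (slot_start i' t') = i'.
Proof.
  intros Ht'. destruct (slot_start_decompose i' t' 0 Ht') as [E _]; [pose proof (slot_len_pos i'); lia|].
  rewrite Nat.add_0_r in E. auto.
Qed.

Lemma slot_start_le_cases i' t' : (t' < nslots i')%nat -> (slot_start i' t' <= n)%nat ->
  (i' = i /\ t' = t) \/ (slot_start i' t' + slot_len i' <= n)%nat.
Proof.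
  intros Ht' Hle. destruct (Nat.eq_dec (slot_start i' t') n) as [Heq | Hne].
  - assert (Ei : i' = i).
    { rewrite <- (block_of_slot_start i' t' Ht'), <- (block_of_slot_start i t ht). fold n. congruence. }
    subst i'. left. split; auto. unfold n, slot_start in Heq. pose proof (slot_len_pos i). nia.
  - right. destruct (Nat.lt_total i' i) as [Hlt | [Heq | Hgt]].
    + pose proof (slot_start_end_le i' t' Ht'). pose proof (block_start_lt i' i Hlt).
      assert (block_start i <= n)%nat by (unfold n, slot_start; lia). lia.
    + subst i'. unfold n, slot_start in *. pose proof (slot_len_pos i).
      assert (t' < t)%nat by nia. nia.
    + pose proof (block_start_lt i i' Hgt). pose proof (slot_start_end_le i t ht).
      assert (block_start i' <= slot_start i' t')%nat by (unfold slot_start; lia).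
      fold n in H0. lia.
Qed.

Lemma sq_iterT_sub_target_le j :
  (iterT (Bshift (weight p)) n hc_vector j - target i t j) ^ 2 <= spread err_arr (n + j).
Proof.
  rewrite iterT_Bshift_weight. pose proof (spread_ge0 err_arr (n + j) err_arr_ge0) as Hnn.
  destruct (Nat.lt_ge_cases j (tsize i t)) as [Hj | Hj].
  - unfold hc_vector. replace (j + n)%nat with (slot_start i t + j)%nat by (unfold n; lia).
    rewrite spread_slot_start; auto; [|pose proof (tsize_lt_slot_len i t); lia].
    fold n. replace (wprod p j n * (target i t j / wprod p j n) - target i t j) with 0.
    { simpl; lra. }
    pose proof (wprod_pos p j n). field; lra.
  - rewrite (target_ge_tsize i t j Hj), Rminus_0_r.
    set (J := (n + j)%nat). replace (j + n)%nat with J by (unfold J; lia).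
    assert (HJ1 : (1 <= J)%nat) by (pose proof slot_start_ge1; unfold J; lia).
    destruct (block_of_spec J HJ1) as [Hs1 Hs2].
    set (i' := block_of J) in *. set (r := (J - block_start i')%nat).
    set (t' := (r / slot_len i')%nat). set (k := (r mod slot_len i')%nat).
    assert (Hsp : (slot_len i' <> 0)%nat) by (pose proof (slot_len_pos i'); lia).
    assert (HJ : J = (slot_start i' t' + k)%nat).
    { unfold slot_start, t', k. pose proof (Nat.div_mod_eq r (slot_len i')). unfold r in *. nia. }
    assert (Hk : (k < slot_len i')%nat) by (apply Nat.mod_upper_bound; auto).
    unfold hc_vector, spread at 1 2.
    destruct (Nat.eqb_spec J 0); [lia|]. fold i' r t' k.
    destruct (Nat.ltb_spec t' (nslots i')) as [Ht' | Ht']; [|simpl; lra].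
    unfold err_arr. destruct (Nat.ltb_spec n (slot_start i' t')) as [Hlt | Hge].
    + replace (slot_start i' t') with ((slot_start i' t' - n) + n)%nat at 1 by lia.
      rewrite wprod_add. replace (k + (slot_start i' t' - n))%nat with j by (unfold J in HJ; lia).
      pose proof (wprod_pos p k (slot_start i' t' - n)). pose proof (wprod_pos p j n).
      right. unfold Rdiv. field. lra.
    + destruct (slot_start_le_cases i' t' Ht' Hge) as [[-> ->] | Hend]; [|lia].
      replace k with j by (unfold J, n in HJ; lia).
      rewrite (target_ge_tsize i t j Hj). unfold Rdiv; simpl; lra.
Qed.

Lemma block_total_err_before i' : (i' < i)%nat -> block_total err_arr i' <= 0.
Proof.
  intros Hi. unfold block_total. rewrite (psum_ext _ (fun _ => 0)); [rewrite psum_const; lra|].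
  intros t' Ht'. rewrite (psum_ext _ (fun _ => 0)); [rewrite psum_const; lra|].
  intros k _. apply err_arr_eq0. pose proof (slot_start_end_le i' t' Ht').
  pose proof (block_start_lt i' i Hi).
  assert (block_start i <= n)%nat by (unfold n, slot_start; lia). pose proof (slot_len_pos i'). lia.
Qed.

Lemma block_total_err_after i' : (i < i')%nat -> block_total err_arr i' <= 2 / 2 ^ i'.
Proof.
  intros Hi. unfold block_total.
  assert (Hslot : forall t', (t' < nslots i')%nat ->
    psum (fun k => err_arr i' t' k) (slot_len i') <= 2 * 2 ^ i' * / 4 ^ ((p + 1) * i')).
  { intros t' Ht'. pose proof (slot_start_end_le i t ht). pose proof (block_start_lt i i' Hi).
    assert (block_start i' <= slot_start i' t')%nat by (unfold slot_start; lia).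
    assert (Hlt : (n < slot_start i' t')%nat) by (unfold n; pose proof (slot_len_pos i); lia).
    assert (0 < 4 ^ ((p + 1) * i')) by (apply pow_lt; lra).
    assert (HA : 0 < 4 ^ ((p + 1) * i') * / 2) by lra.
    unfold err_arr. destruct (Nat.ltb_spec n (slot_start i' t')); [|lia].
    eapply Rle_trans; [apply (psum_target_div_wprod_le_pow _ _ _ _ _ HA)|].
    - rewrite Rpow_mult_distr, pow_inv, <- pow_mult.
      assert (2 <= 2 ^ p) by (replace 2 with (2 ^ 1) at 1 by (simpl; lra); apply Rle_pow; [lra|lia]).
      assert (HI : INR (block_start i') <= 2 * INR (slot_start i' t' - n)).
      { replace 2 with (INR 2) at 1 by (simpl; lra). rewrite <- mult_INR. apply le_INR. unfold n. lia. }
      unfold block_start in HI. rewrite INR_pow4 in HI.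
      replace ((p + 1) * i' * p)%nat with (p * (p + 1) * i')%nat by lia.
      assert (0 < 4 ^ (p * (p + 1) * i')) by (apply pow_lt; lra).
      apply Rle_trans with (4 ^ (p * (p + 1) * i') * / 2); [|lra].
      apply Rmult_le_compat_l; [lra|]. apply Rinv_le_contravar; lra.
    - replace (INR (tsize i' t') ^ 3 * 4 ^ tsize i' t' / (4 ^ ((p + 1) * i') * / 2))
        with (2 * (INR (tsize i' t') ^ 3 * 4 ^ tsize i' t') * / 4 ^ ((p + 1) * i')) by (field; lra).
      apply Rmult_le_compat_r; [left; apply Rinv_0_lt_compat; auto|].
      apply Rmult_le_compat_l; [lra|]. apply cube_mul_pow4_le. pose proof (tsize_le i' t'). lia. }
  eapply Rle_trans; [apply psum_le; intros t' Ht'; apply (Hslot t' Ht')|].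
  rewrite psum_const. unfold nslots. rewrite INR_pow4.
  replace ((p + 1) * i')%nat with (p * i' + i')%nat by lia. rewrite pow_add.
  assert (0 < 4 ^ (p * i')) by (apply pow_lt; lra). assert (0 < 2 ^ i') by (apply pow_lt; lra).
  replace (4 ^ i') with (2 ^ i' * 2 ^ i') by (rewrite <- Rpow_mult_distr; f_equal; lra).
  right. field. lra.
Qed.

(* Slots [t' > t] fewer than [2^(p i)] slots away contribute up to [2^(i/2) 4^(-p i)] each;
   the farther ones are damped by an extra factor [2^(-i)]. *)
Lemma psum_err_arr_same_block t' : (t' < nslots i)%nat ->
  psum (fun k => err_arr i t' k) (slot_len i) <=
    (if andb (t <? t')%nat (t' <? t + 1 + 2 ^ (p * i))%nat then 2 ^ (i / 2) * / 4 ^ (p * i) else 0)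
    + 2 ^ (i / 2) * / (4 ^ (p * i) * 2 ^ i).
Proof.
  intros Ht'. set (h := (i / 2)%nat).
  assert (H4 : 0 < 4 ^ (p * i)) by (apply pow_lt; lra). assert (H2 : 0 < 2 ^ i) by (apply pow_lt; lra).
  assert (Hh : 0 < 2 ^ h) by (apply pow_lt; lra).
  assert (Hb : 0 <= 2 ^ h * / (4 ^ (p * i) * 2 ^ i))
    by (apply Rmult_le_pos; [lra|left; apply Rinv_0_lt_compat, Rmult_lt_0_compat; auto]).
  assert (Ha : 0 <= 2 ^ h * / 4 ^ (p * i)) by (apply Rmult_le_pos; [lra|left; apply Rinv_0_lt_compat; auto]).
  destruct (Nat.le_gt_cases t' t).
  - rewrite (psum_ext _ (fun _ => 0)); [rewrite psum_const; destruct (andb _ _); lra|].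
    intros; apply err_arr_eq0. unfold n, slot_start.
    pose proof (Nat.mul_le_mono_r t' t (slot_len i) H). lia.
  - assert (Hd : (slot_start i t' - n = (t' - t) * slot_len i)%nat)
      by (unfold n, slot_start; rewrite Nat.mul_sub_distr_r; nia).
    assert (Hm : INR (tsize i t') ^ 3 * 4 ^ tsize i t' <= 2 ^ h).
    { apply cube_mul_pow4_le. pose proof (tsize_le i t'). unfold h. apply Nat.div_le_lower_bound; lia. }
    assert (Hlt : (n < slot_start i t')%nat).
    { unfold n, slot_start. pose proof (slot_len_pos i).
      pose proof (Nat.mul_le_mono_r (S t) t' (slot_len i) H). simpl in *. lia. }
    unfold err_arr. destruct (Nat.ltb_spec n (slot_start i t')); [|lia].
    destruct (Nat.ltb_spec t t'); [|lia]. simpl andb.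
    destruct (Nat.ltb_spec t' (t + 1 + 2 ^ (p * i))).
    + eapply Rle_trans; [apply (psum_target_div_wprod_le_pow _ _ _ _ _ H4)|].
      * rewrite <- pow_mult, Hd, mult_INR. unfold slot_len. rewrite INR_pow4.
        replace (p * i * p)%nat with (p * p * i)%nat by lia.
        assert (1 <= INR (t' - t)) by (apply (le_INR 1); lia).
        assert (0 < 4 ^ (p * p * i)) by (apply pow_lt; lra). nra.
      * unfold Rdiv. apply Rle_trans with (2 ^ h * / 4 ^ (p * i)); [|lra].
        apply Rmult_le_compat_r; auto. left; apply Rinv_0_lt_compat; auto.
    + assert (HA : 0 < 4 ^ (p * i) * 2 ^ i) by (apply Rmult_lt_0_compat; auto).
      eapply Rle_trans; [apply (psum_target_div_wprod_le_pow _ _ _ _ _ HA)|].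
      * rewrite Rpow_mult_distr, <- !pow_mult, Hd, mult_INR. unfold slot_len. rewrite INR_pow4.
        replace (p * i * p)%nat with (p * p * i)%nat by lia.
        assert (HK : INR (2 ^ (p * i)) <= INR (t' - t)) by (apply le_INR; lia). rewrite INR_pow2 in HK.
        replace (i * p)%nat with (p * i)%nat by lia.
        assert (0 < 4 ^ (p * p * i)) by (apply pow_lt; lra). nra.
      * unfold Rdiv. rewrite Rplus_0_l. apply Rmult_le_compat_r; auto.
        left; apply Rinv_0_lt_compat; auto.
Qed.

Lemma block_total_err_same : block_total err_arr i <= 2 * 2 ^ (i / 2) / 2 ^ i.
Proof.
  unfold block_total. set (h := (i / 2)%nat). set (K := (2 ^ (p * i))%nat).
  set (a := 2 ^ h * / 4 ^ (p * i)). set (b := 2 ^ h * / (4 ^ (p * i) * 2 ^ i)).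
  assert (H4 : 0 < 4 ^ (p * i)) by (apply pow_lt; lra). assert (H2 : 0 < 2 ^ i) by (apply pow_lt; lra).
  assert (Hh : 0 < 2 ^ h) by (apply pow_lt; lra).
  assert (Ha : 0 <= a) by (unfold a; apply Rmult_le_pos; [lra|left; apply Rinv_0_lt_compat; auto]).
  eapply Rle_trans; [apply psum_le; intros t' Ht'; apply (psum_err_arr_same_block t' Ht')|].
  fold h K a b. rewrite psum_add, psum_const.
  pose proof (psum_window t K a (nslots i) Ha).
  assert (INR K * a + INR (nslots i) * b <= 2 * 2 ^ h / 2 ^ i).
  { unfold K, a, b, nslots. rewrite INR_pow2, INR_pow4.
    assert (2 ^ i <= 2 ^ (p * i)) by (apply Rle_pow; [lra|nia]).
    assert (0 < 2 ^ (p * i)) by (apply pow_lt; lra).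
    replace (4 ^ (p * i)) with (2 ^ (p * i) * 2 ^ (p * i)) by (rewrite <- Rpow_mult_distr; f_equal; lra).
    replace (2 ^ (p * i) * (2 ^ h * / (2 ^ (p * i) * 2 ^ (p * i)))
             + 2 ^ (p * i) * 2 ^ (p * i) * (2 ^ h * / (2 ^ (p * i) * 2 ^ (p * i) * 2 ^ i)))
      with (2 ^ h * / 2 ^ (p * i) + 2 ^ h / 2 ^ i) by (field; lra).
    assert (/ 2 ^ (p * i) <= / 2 ^ i) by (apply Rinv_le_contravar; lra).
    unfold Rdiv. nra. }
  lra.
Qed.

Lemma psum_orbit_error_le M :
  psum (fun j => (iterT (Bshift (weight p)) n hc_vector j - target i t j) ^ 2) M
  <= 2 * 2 ^ (i / 2) / 2 ^ i + 2 / 2 ^ i.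
Proof.
  assert (Hs : forall J, 0 <= spread err_arr J) by (intros; apply spread_ge0, err_arr_ge0).
  eapply Rle_trans; [apply psum_le; intros j _; apply sq_iterT_sub_target_le|].
  apply Rle_trans with (psum (spread err_arr) (n + M)).
  { rewrite psum_split. pose proof (psum_ge0 (spread err_arr) n Hs). lra. }
  eapply Rle_trans; [apply (psum_mono _ (n + M) (block_start (n + M))); auto; apply block_start_ge|].
  rewrite psum_spread.
  set (E1 := 2 * 2 ^ (i / 2) / 2 ^ i).
  assert (HE1 : 0 <= E1).
  { unfold E1, Rdiv. apply Rmult_le_pos; [apply Rmult_le_pos; [lra|apply pow_le; lra]|].
    left; apply Rinv_0_lt_compat, pow_lt; lra. }
  apply Rle_trans with (psum (fun j => (if (j =? i)%nat then E1 else 0)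
                                      + 2 * (if (i <? j)%nat then / 2 ^ j else 0)) (n + M)).
  - apply psum_le. intros i' _. destruct (Nat.lt_total i' i) as [Hlt | [Heq | Hgt]].
    + pose proof (block_total_err_before i' Hlt).
      destruct (Nat.eqb_spec i' i); try lia. destruct (Nat.ltb_spec i i'); try lia. lra.
    + subst. pose proof block_total_err_same. rewrite Nat.eqb_refl.
      destruct (Nat.ltb_spec i i); try lia. fold E1 in H. lra.
    + pose proof (block_total_err_after i' Hgt).
      destruct (Nat.eqb_spec i' i); try lia. destruct (Nat.ltb_spec i i'); try lia.
      unfold Rdiv in H. lra.
  - rewrite psum_add, psum_scal. pose proof (psum_single i E1 (n + M) HE1).
    pose proof (psum_geom_tail i (n + M)). unfold Rdiv. lra.
Qed.

End OrbitError.

Lemma psum_orbit_sub_decode_le j m u0 w M : (1 <= m)%nat -> (8 * m <= j)%nat ->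
  (slot_index m u0 w < nslots j)%nat ->
  psum (fun k => (iterT (Bshift (weight p)) (slot_start j (slot_index m u0 w)) hc_vector k
                  - decode m u0 k) ^ 2) M
  <= 2 * 2 ^ (j / 2) / 2 ^ j + 2 / 2 ^ j.
Proof.
  intros Hm Hj Ht. rewrite (psum_ext _ (fun k =>
    (iterT (Bshift (weight p)) (slot_start j (slot_index m u0 w)) hc_vector k - target j (slot_index m u0 w) k) ^ 2)).
  - apply psum_orbit_error_le; auto.
  - intros k _. rewrite target_slot_index; auto.
Qed.

Lemma count_upto_slots_ge (A : nat -> Prop) m u0 J0 j :
  (forall j w, (J0 <= j)%nat -> (slot_index m u0 w < nslots j)%nat -> A (slot_start j (slot_index m u0 w))) ->
  (J0 + 2 * (2 ^ m * (2 * u0 + 1)) <= j)%nat ->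
  (nslots j / (2 * slot_period m) <= count_upto A (block_start (S j)))%nat.
Proof.
  intros HA Hj. set (Q := slot_period m) in *. set (W := (nslots j / (2 * Q))%nat).
  pose proof (slot_period_pos m) as HQ. fold Q in HQ.
  destruct (Nat.eq_dec W 0) as [-> | HW0]; [lia|].
  assert (HW : (2 * Q * W <= nslots j)%nat) by apply Nat.Div0.mul_div_le.
  assert (Hj_le : (j <= nslots j)%nat).
  { unfold nslots. assert (j < 4 ^ j)%nat by (apply Nat.pow_gt_lin_r; lia).
    assert (4 ^ j <= 4 ^ (p * j))%nat by (apply Nat.pow_le_mono_r; nia). lia. }
  assert (Hslot : forall w, (w < W)%nat -> (slot_index m u0 w < nslots j)%nat).
  { intros w Hw. unfold slot_index. fold Q. nia. }
  set (g := fun w => slot_start j (slot_index m u0 w)).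
  assert (Hcnt : (W <= count_upto A (g (W - 1)))%nat).
  { replace W with (S (W - 1)) at 1 by lia. apply count_upto_ge_increasing.
    - intros w Hw. apply HA; [lia|]. apply Hslot. lia.
    - intros w. apply slot_start_lt, slot_index_lt_succ. }
  assert (Hg : (g (W - 1) <= block_start (S j))%nat).
  { pose proof (slot_start_end_le j _ (Hslot (W - 1)%nat ltac:(lia))).
    pose proof (block_start_lt j (S j) ltac:(lia)). unfold g. lia. }
  pose proof (count_upto_mono A _ _ Hg). lia.
Qed.

(* Up to [N ~ 4^(p i)] the set contains [~ 4^(p (i-1))] such times below
   [block_start i = nslots i ^ (p+1) <= N^(p+1)]. *)
Lemma q_lower_dens_pos_of_slots (A : nat -> Prop) q m u0 J0 : (p + 1 <= q)%nat ->
  (forall j w, (J0 <= j)%nat -> (slot_index m u0 w < nslots j)%nat -> A (slot_start j (slot_index m u0 w))) ->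
  q_lower_dens_pos q A.
Proof.
  intros Hq HA. set (Q := slot_period m). pose proof (slot_period_pos m) as HQ. fold Q in HQ.
  set (J1 := (J0 + 2 * (2 ^ m * (2 * u0 + 1)) + 4 * Q)%nat).
  assert (HQr : 1 <= INR Q) by (apply (le_INR 1); auto).
  assert (H4p : 0 < 4 ^ (2 * p)) by (apply pow_lt; lra).
  exists (/ (4 * INR Q * 4 ^ (2 * p))). split; [apply Rinv_0_lt_compat; nra|].
  exists (4 ^ (p * (J1 + 1)))%nat. intros N HN HN1.
  destruct (log2_div_spec p N hp HN1) as [Hb1 Hb2].
  set (i := (Nat.log2 N / (2 * p))%nat) in *.
  assert (Hi : (J1 + 1 <= i)%nat) by (apply log2_div_ge; auto).
  set (j := (i - 1)%nat).
  assert (Hj_le : (j <= nslots j)%nat).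
  { unfold nslots. assert (j < 4 ^ j)%nat by (apply Nat.pow_gt_lin_r; lia).
    assert (4 ^ j <= 4 ^ (p * j))%nat by (apply Nat.pow_le_mono_r; nia). lia. }
  assert (Hcnt : (nslots j / (2 * Q) <= count_upto A (N ^ q))%nat).
  { eapply Nat.le_trans; [apply (count_upto_slots_ge A m u0 J0 j HA); unfold J1 in Hi; lia|].
    apply count_upto_mono. replace (S j) with i by lia.
    assert (Est : block_start i = (nslots i ^ (p + 1))%nat)
      by (unfold block_start, nslots; rewrite <- Nat.pow_mul_r; f_equal; lia).
    assert (nslots i ^ (p + 1) <= N ^ (p + 1))%nat by (apply Nat.pow_le_mono_l; unfold nslots; auto).
    assert (N ^ (p + 1) <= N ^ q)%nat by (apply Nat.pow_le_mono_r; lia). lia. }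
  assert (HWr : INR (nslots j) / (4 * INR Q) <= INR (count_upto A (N ^ q))).
  { apply le_INR in Hcnt. eapply Rle_trans; [|apply Hcnt].
    replace (4 * INR Q) with (2 * INR (2 * Q)) by (rewrite mult_INR; simpl; lra).
    apply INR_div_ge; [lia|]. unfold J1 in Hi. lia. }
  assert (HNr : INR N <= 4 ^ (2 * p) * INR (nslots j)).
  { apply lt_INR in Hb2. rewrite INR_pow4 in Hb2. unfold nslots. rewrite INR_pow4.
    replace (p * S i)%nat with (2 * p + p * j)%nat in Hb2 by (unfold j; nia). rewrite pow_add in Hb2. lra. }
  assert (HN0 : 0 < INR N) by (apply lt_0_INR; lia).
  assert (0 < INR (nslots j)) by (apply lt_0_INR; pose proof (nslots_pos j); lia).
  unfold Rdiv. apply Rmult_le_reg_r with (INR N); auto.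
  replace (INR (count_upto A (N ^ q)) * / INR N * INR N) with (INR (count_upto A (N ^ q)))
    by (field; lra).
  apply Rle_trans with (/ (4 * INR Q * 4 ^ (2 * p)) * (4 ^ (2 * p) * INR (nslots j))).
  - apply Rmult_le_compat_l; auto. left; apply Rinv_0_lt_compat; nra.
  - replace (/ (4 * INR Q * 4 ^ (2 * p)) * (4 ^ (2 * p) * INR (nslots j)))
      with (INR (nslots j) / (4 * INR Q)) by (field; lra). lra.
Qed.

Theorem q_freq_hypercyclic_of_gt q : (p + 1 <= q)%nat -> q_freq_hypercyclic_l2 q (Bshift (weight p)).
Proof.
  intros Hq. exists hc_vector. split; [apply hc_vector_in_l2|].
  intros U HU [z [Hz HUz]]. destruct (HU z Hz HUz) as [eps [Heps Hball]]. destruct Hz as [Lz HLz].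
  assert (Hdl : 0 < eps ^ 2 / 8) by (apply Rdiv_lt_0_compat; [apply pow_lt|]; lra).
  destruct (decode_dense z Lz HLz _ Hdl) as [m [u0 [Hm Hzy]]].
  destruct (INR_unbounded (4 / (eps ^ 2 / 8))) as [K HK].
  assert (HK2 : 4 / 2 ^ K <= eps ^ 2 / 8).
  { assert (INR K <= 2 ^ K) by (rewrite <- INR_pow2; apply le_INR, Nat.lt_le_incl, Nat.pow_gt_lin_r; lia).
    assert (0 < 2 ^ K) by (apply pow_lt; lra).
    unfold Rdiv in *. apply Rmult_le_reg_r with (2 ^ K * / (eps ^ 2 * / 8)).
    - apply Rmult_lt_0_compat; [lra|apply Rinv_0_lt_compat; lra].
    - field_simplify; [|lra|lra]. field_simplify in HK; lra. }
  destruct (orbit_error_bound_small K) as [I0 HI0].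
  apply (q_lower_dens_pos_of_slots _ q m u0 (I0 + 8 * m)); auto.
  intros j w Hj Hslot. apply (in_ball_of_common_approx U z Lz _ (decode m u0) eps); auto.
  intros M. eapply Rle_trans; [apply psum_orbit_sub_decode_le; auto; lia|].
  eapply Rle_trans; [apply HI0; lia|]. auto.
Qed.

End HypercyclicVector.

Theorem mainTheorem7 (p : nat) (hp : (1 <= p)%nat) :
  ~ q_freq_hypercyclic_l2 p (Bshift (weight p)) /\
  (forall q : nat, (p + 1 <= q)%nat -> q_freq_hypercyclic_l2 q (Bshift (weight p))).
Proof.
  split.
  - apply not_p_freq_hypercyclic; auto.
  - intros q Hq. apply q_freq_hypercyclic_of_gt; auto.
Qed.
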